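(* Let $\Lambda_{TU}=\{(F(x),\Lambda_x,v(x))\}_{x\in X}$ be a continuous $(T,U)$-controlled $g$-fusion frame for $H$ with frame operator $S_C$, and assume $S_C^{-1}$ commutes with $T$ and with $U$. Then $\Gamma_{TU}=\{(S_C^{-1}F(x),\;\Lambda_xP_{F(x)}S_C^{-1},\;v(x))\}_{x\in X}$ is a continuous $(T,U)$-controlled $g$-fusion frame for $H$ whose frame operator is $S_C^{-1}$.
   Context: $H$ is a separable complex Hilbert space, $\mathcal{B}(H)$ the bounded operators on $H$, $\mathcal{GB}^+(H)$ the positive bounded operators on $H$ with bounded inverse, $P_M$ the orthogonal projection onto a closed subspace $M$. Let $(X,\mu)$ be a measure space, $\{K_x\}_{x\in X}$ Hilbert spaces, $v:X\to\mathbb{R}^+$ measurable, $F$ a map from $X$ to closed subspaces of $H$ with $x\mapsto P_{F(x)}f$ weakly measurable for all $f$, $\Lambda_x\in\mathcal{B}(F(x),K_x)$, and $T,U\in\mathcal{GB}^+(H)$. The family is a continuous $(T,U)$-controlled $g$-fusion frame for $H$ if there are $0<A\le B<\infty$ with $A\|f\|^2\le\int_X v(x)^2\langle\Lambda_xP_{F(x)}Uf,\Lambda_xP_{F(x)}Tf\rangle d\mu(x)\le B\|f\|^2$ for all $f\in H$. Its frame operator $S_C\in\mathcal{B}(H)$ is given by $\langle S_Cf,g\rangle=\int_X v(x)^2\langle T^*P_{F(x)}\Lambda_x^*\Lambda_xP_{F(x)}Uf,g\rangle d\mu(x)$; it satisfies $AI_H\le S_C\le BI_H$ and is invertible. In $\Gamma_{TU}$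 the subspace attached to $x$ is $S_C^{-1}F(x)$ and the operator is $\Lambda_xP_{F(x)}S_C^{-1}$ restricted to it, so its frame operator $S'$ satisfies $\langle S'f,f\rangle=\int_X v(x)^2\langle\Lambda_xP_{F(x)}S_C^{-1}P_{S_C^{-1}F(x)}Uf,\Lambda_xP_{F(x)}S_C^{-1}P_{S_C^{-1}F(x)}Tf\rangle d\mu(x)$. *)

(* Complex scalars are R[i] (mathcomp real_closed `complex`) for R : realType;
   the order on R[i] is the numClosedField order: z <= w iff w - z is a
   nonnegative real. *)
From mathcomp Require Import all_boot all_algebra.
From mathcomp Require Import all_classical all_reals all_analysis.
From mathcomp Require Import complex.
Set Implicit Arguments. Unset Strict Implicit. Unset Printing Implicit Defensive.
Import GRing.Theory Num.Theory.
Local Open Scope ring_scope.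
Local Open Scope classical_set_scope.

Definition ipnorm (R : realType) (V : lmodType R[i]) (ip : V -> V -> R[i])
  (x : V) : R := Num.sqrt (complex.Re (ip x x)).

Definition ip_cvg (R : realType) (V : lmodType R[i]) (ip : V -> V -> R[i])
  (u : nat -> V) (f : V) : Prop :=
  forall e : R, 0 < e -> exists N : nat, forall n, (N <= n)%N ->
    ipnorm ip (u n - f) < e.

Definition ip_cauchy (R : realType) (V : lmodType R[i]) (ip : V -> V -> R[i])
  (u : nat -> V) : Prop :=
  forall e : R, 0 < e -> exists N : nat, forall m n, (N <= m)%N -> (N <= n)%N ->
    ipnorm ip (u m - u n) < e.

Record hilbert (R : realType) := Hilbert {
  hsort :> lmodType R[i];
  hip : hsort -> hsort -> R[i];
  hip_linear : forall (a : R[i]) (x y z : hsort),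
      hip (a *: x + y) z = a * hip x z + hip y z;
  hip_conj : forall x y : hsort, hip x y = Num.conj (hip y x);
  hip_ge0 : forall x : hsort, 0 <= hip x x;
  hip_eq0 : forall x : hsort, hip x x = 0 -> x = 0;
  hcomplete : forall u : nat -> hsort, ip_cauchy hip u ->
      exists f, ip_cvg hip u f }.

Arguments hip {R} h _ _.

Definition hnorm (R : realType) (H : hilbert R) (x : H) : R := ipnorm (hip H) x.
Definition hcvg (R : realType) (H : hilbert R) (u : nat -> H) (f : H) : Prop :=
  ip_cvg (hip H) u f.

Definition separable (R : realType) (H : hilbert R) : Prop :=
  exists D : nat -> H, forall (f : H) (e : R), 0 < e ->
    exists n, hnorm (f - D n) < e.

Definition bounded_op (R : realType) (H1 H2 : hilbert R) (A : H1 -> H2) : Prop :=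
  (forall (a : R[i]) (x y : H1), A (a *: x + y) = a *: A x + A y) /\
  exists M : R, forall x, hnorm (A x) <= M * hnorm x.

Definition GBpos (R : realType) (H : hilbert R) (A : H -> H) : Prop :=
  bounded_op A /\ (forall f : H, 0 <= hip H (A f) f) /\
  exists B : H -> H, bounded_op B /\ (forall f, A (B f) = f) /\
                     (forall f, B (A f) = f).

Definition closed_subspace (R : realType) (H : hilbert R) (M : set H) : Prop :=
  M 0 /\ (forall (a : R[i]) (x y : H), M x -> M y -> M (a *: x + y)) /\
  (forall (u : nat -> H) (f : H), (forall n, M (u n)) -> hcvg u f -> M f).

Definition orth_proj (R : realType) (H : hilbert R) (M : set H) (P : H -> H)
  : Prop :=
  forall f : H, M (P f) /\ (forall g : H, M g -> hip H (f - P f) g = 0).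

Definition cintegrable (R : realType) (d : measure_display) (X : measurableType d)
  (mu : {measure set X -> \bar R}) (h : X -> R[i]) : Prop :=
  mu.-integrable setT (fun x => (complex.Re (h x))%:E) /\
  mu.-integrable setT (fun x => (complex.Im (h x))%:E).

Definition cintegral (R : realType) (d : measure_display) (X : measurableType d)
  (mu : {measure set X -> \bar R}) (h : X -> R[i]) : R[i] :=
  Complex (Rintegral mu setT (fun x => complex.Re (h x)))
          (Rintegral mu setT (fun x => complex.Im (h x))).

Definition weakly_measurable (R : realType) (d : measure_display)
  (X : measurableType d) (H : hilbert R) (P : X -> H -> H) : Prop :=
  forall f g : H,
    measurable_fun setT (fun x => complex.Re (hip H (P x f) g)) /\
    measurable_fun setT (fun x => complex.Im (hip H (P x f) g)).

Definition frame_int (R : realType) (d : measure_display) (X : measurableType d)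
  (H : hilbert R) (K : X -> hilbert R) (v : X -> R) (P : X -> H -> H)
  (Lam : forall x, H -> K x) (T U : H -> H) (f g : H) (x : X) : R[i] :=
  Complex (v x ^+ 2) 0 * hip (K x) (Lam x (P x (U f))) (Lam x (P x (T g))).

(* {(F(x), Lam_x, v(x))} is a continuous (T,U)-controlled g-fusion frame;
   P x is the orthogonal projection onto F x; Lam x is a bounded operator
   on H (only its restriction to F x matters, it is always applied after P x). *)
Definition cgf_frame (R : realType) (d : measure_display) (X : measurableType d)
  (mu : {measure set X -> \bar R}) (H : hilbert R) (K : X -> hilbert R)
  (v : X -> R) (F : X -> set H) (P : X -> H -> H) (Lam : forall x, H -> K x)
  (T U : H -> H) : Prop :=
  (forall x, closed_subspace (F x) /\ orth_proj (F x) (P x)) /\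
  weakly_measurable P /\
  (forall x, bounded_op (Lam x)) /\
  measurable_fun setT v /\ (forall x, 0 < v x) /\
  GBpos T /\ GBpos U /\
  (forall f : H, cintegrable mu (frame_int v P Lam T U f f)) /\
  exists A B : R, 0 < A /\ A <= B /\
    forall f : H,
      Complex (A * hnorm f ^+ 2) 0 <= cintegral mu (frame_int v P Lam T U f f)
      /\ cintegral mu (frame_int v P Lam T U f f) <= Complex (B * hnorm f ^+ 2) 0.

(* S is the frame operator:
   <S f, g> = \int v(x)^2 <T^* P Lam^* Lam P U f, g> dmu
            = \int v(x)^2 <Lam P U f, Lam P T g> dmu   (T = T^* as T >= 0) *)
Definition is_frame_op (R : realType) (d : measure_display) (X : measurableType d)
  (mu : {measure set X -> \bar R}) (H : hilbert R) (K : X -> hilbert R)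
  (v : X -> R) (P : X -> H -> H) (Lam : forall x, H -> K x)
  (T U : H -> H) (S : H -> H) : Prop :=
  bounded_op S /\
  forall f g : H, cintegrable mu (frame_int v P Lam T U f g) /\
    hip H (S f) g = cintegral mu (frame_int v P Lam T U f g).

From mathcomp Require Import all_boot all_order all_algebra.
From mathcomp Require Import all_classical all_reals all_analysis.
From mathcomp Require Import complex.
From mathcomp Require Import ring lra.
Import Order.TTheory GRing.Theory Num.Theory.
Set Implicit Arguments. Unset Strict Implicit.
Import numFieldNormedType.Exports.
Local Open Scope ring_scope.
Local Open Scope classical_set_scope.

(* 1. Frame bounds A |f|^2 <= <S f, f> <= B |f|^2 make S self-adjoint and coercive,
      so Sinv is linear, self-adjoint, bounded, and
      |f|^2 / (M^2 + A^2) <= |Sinv f|^2 <= |f|^2 / A^2   (M a bound of S).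
   2. If Q x projects onto Sinv F(x), then P x Sinv Q x = P x Sinv (self-adjointness
      of Sinv).  Hence the integrand of Gamma at (f, g) is that of the original
      family at (Sinv f, Sinv g); as Sinv commutes with T and U, this identifies
      Sinv as the frame operator of Gamma, and its bounds give the frame bounds.
   3. The genuinely analytic point is weak measurability of x |-> Q x f.  Writing
      Q x f = Sinv m with m in F(x), m is the fixed point of the contraction
      z |-> P x (z - A^2 Sinv^2 z + A^2 Sinv f), whose iterates are weakly
      measurable (in a separable space inner products of weakly measurable maps
      are measurable) and converge geometrically; a pointwise limit of measurable
      functions is measurable. *)

Lemma sq_le (R : realType) (x y : R) : 0 <= x -> x <= y -> x ^+ 2 <= y ^+ 2.
Proof. by move=> x0 xy; rewrite !expr2; nra. Qed.

Lemma sq_le_inv (R : realType) (x y : R) : 0 <= y -> x ^+ 2 <= y ^+ 2 -> x <= y.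
Proof. by move=> y0; rewrite !expr2 => h; nra. Qed.

Lemma sq_lt_norm (R : realType) (x e : R) : 0 < e -> x ^+ 2 < e ^+ 2 -> `|x| < e.
Proof.
move=> e0; rewrite -(real_normK (num_real x)) => h.
have := normr_ge0 x; nra.
Qed.

Lemma cvg_geometric_sq (R : realType) (a : nat -> R) (l C q : R) :
  0 <= q -> q < 1 -> (forall k, (a k - l) ^+ 2 <= C * q ^+ k) ->
  (a : R^nat) @ \oo --> l.
Proof.
move=> q0 q1 ha; apply/cvgrPdist_lt => e e0.
have qk0 : (GRing.exp q : R^nat) @ \oo --> 0 by apply: cvg_expr; rewrite ger0_norm.
have ep : 0 < e ^+ 2 / (`|C| + 1) by rewrite divr_gt0 ?exprn_gt0 // ltr_wpDl.
move/cvgrPdist_lt : qk0 => /(_ _ ep); apply: filterS => k.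
rewrite sub0r normrN ger0_norm ?exprn_ge0 // ltr_pdivlMr ?ltr_wpDl // => hk.
apply: sq_lt_norm => //; rewrite -sqrrN opprB.
apply: (le_lt_trans (ha k)); have := exprn_ge0 k q0; have := ler_norm C.
have := normr_ge0 C; nra.
Qed.

Fixpoint runmax (R : realType) (phi : nat -> R) (k : nat) : R :=
  if k is k'.+1 then Num.max (runmax phi k') (phi k) else phi 0%N.

Lemma runmax_cvg (R : realType) (phi : nat -> R) (L : R) :
  (forall n, phi n <= L) -> (forall e, 0 < e -> exists n, L - e < phi n) ->
  (runmax phi : R^nat) @ \oo --> L.
Proof.
move=> hle hsup; apply/cvgrPdist_lt => e e0.
have [n hn] := hsup e e0.
have ge_n k : (n <= k)%N -> phi n <= runmax phi k.
  elim: k => [|k IH]; first by rewrite leqn0 => /eqP ->.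
  rewrite leq_eqVlt => /orP[/eqP -> /=|]; first by rewrite le_max lexx orbT.
  by rewrite ltnS => /IH /= h; rewrite le_max h.
have le_L k : runmax phi k <= L by elim: k => [|k IH] //=; rewrite ge_max IH hle.
apply: filterS (nbhs_infty_ge n) => k nk.
have := ge_n k nk; have := le_L k; rewrite ger0_norm ?subr_ge0 //; lra.
Qed.

Section InnerProduct.
Variables (R : realType) (H : hilbert R).
Local Notation ip := (hip H).
Local Notation N2 x := (complex.Re (hip H x x)).

Lemma ip0l z : ip 0 z = 0.
Proof.
have := hip_linear 1 (0 : H) 0 z; rewrite scale1r addr0 mul1r => h.
by apply: (addrI (ip 0 z)); rewrite addr0 -h.
Qed.

Lemma ipDl x y z : ip (x + y) z = ip x z + ip y z.
Proof. by have := hip_linear 1 x y z; rewrite scale1r mul1r. Qed.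

Lemma ipZl a x z : ip (a *: x) z = a * ip x z.
Proof. by have := hip_linear a x 0 z; rewrite addr0 ip0l addr0. Qed.

Lemma ipBl x y z : ip (x - y) z = ip x z - ip y z.
Proof. by rewrite ipDl -scaleN1r ipZl mulN1r. Qed.

Lemma ipDr x y z : ip z (x + y) = ip z x + ip z y.
Proof. by rewrite (hip_conj z x) (hip_conj z y) hip_conj ipDl rmorphD. Qed.

Lemma ipZr a x z : ip z (a *: x) = Num.conj a * ip z x.
Proof. by rewrite (hip_conj z x) hip_conj ipZl rmorphM. Qed.

Lemma ip0r z : ip z 0 = 0.
Proof. by rewrite hip_conj ip0l rmorph0. Qed.

Lemma ipBr x y z : ip z (x - y) = ip z x - ip z y.
Proof. by rewrite ipDr -scaleN1r ipZr rmorphN rmorph1 mulN1r. Qed.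

Lemma Re_ipC x y : complex.Re (ip y x) = complex.Re (ip x y).
Proof. by rewrite hip_conj; case: (ip x y). Qed.

Lemma ipxx_real x : ip x x = Complex (N2 x) 0.
Proof. by have := hip_ge0 x; rewrite lecE /=; case: (ip x x) => a b /= /andP[/eqP <-]. Qed.

Lemma N2_ge0 x : 0 <= N2 x.
Proof. by have := hip_ge0 x; rewrite lecE /= => /andP[_ ->]. Qed.

Lemma N2_eq0 x : N2 x = 0 -> x = 0.
Proof. by move=> h; apply: hip_eq0; rewrite ipxx_real h. Qed.

Lemma N2D x y : N2 (x + y) = N2 x + N2 y + 2 * complex.Re (ip x y).
Proof. by rewrite ipDl !ipDr !raddfD /= [complex.Re (ip y x)]Re_ipC; lra. Qed.

Lemma N2B x y : N2 (x - y) = N2 x + N2 y - 2 * complex.Re (ip x y).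
Proof.
rewrite ipBl !ipBr !raddfB /= [complex.Re (ip y x)]Re_ipC.
rewrite mulr2n mulrDl mul1r; lra.
Qed.

Lemma Re_ipZr (t : R) x y :
  complex.Re (ip x (Complex t 0 *: y)) = t * complex.Re (ip x y).
Proof. by rewrite ipZr; case: (ip x y) => a b /=; rewrite oppr0 !mul0r subr0. Qed.

Lemma Re_ipZl (t : R) x y :
  complex.Re (ip (Complex t 0 *: x) y) = t * complex.Re (ip x y).
Proof. by rewrite ipZl; case: (ip x y) => a b /=; rewrite !mul0r subr0. Qed.

Lemma N2Z (t : R) x : N2 (Complex t 0 *: x) = t ^+ 2 * N2 x.
Proof. by rewrite Re_ipZl Re_ipZr mulrA expr2. Qed.

Lemma Im_as_Re x y : complex.Im (ip x y) = complex.Re (ip x ('i%C *: y)).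
Proof. by rewrite ipZr; case: (ip x y) => a b /=; lra. Qed.

Lemma cauchy_schwarz_Re x y : complex.Re (ip x y) ^+ 2 <= N2 x * N2 y.
Proof.
have [/N2_eq0 ->|ny] := eqVneq (N2 y) 0; first by rewrite ip0r /= expr2 mul0r ip0l mulr0.
have py : 0 < N2 y by rewrite lt0r ny N2_ge0.
set r := complex.Re (ip x y).
have := N2_ge0 (x + Complex (- r / N2 y) 0 *: y).
rewrite N2D N2Z Re_ipZr -/r => h.
have e : N2 y * (N2 x + (- r / N2 y) ^+ 2 * N2 y + 2 * (- r / N2 y * r)) =
   N2 x * N2 y - r ^+ 2 by field; rewrite ny.
by have := mulr_ge0 (N2_ge0 y) h; rewrite e subr_ge0.
Qed.

Lemma hnorm2 (x : H) : hnorm x ^+ 2 = N2 x.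
Proof. by rewrite /hnorm /ipnorm sqr_sqrtr // N2_ge0. Qed.

Lemma hnorm_ge0 (x : H) : 0 <= hnorm x.
Proof. exact: sqrtr_ge0. Qed.

Lemma hnorm_le_of_N2 (k : R) (x y : H) : 0 <= k -> N2 y <= k ^+ 2 * N2 x ->
  hnorm y <= k * hnorm x.
Proof.
move=> k0 h; apply: sq_le_inv; first by rewrite mulr_ge0 ?hnorm_ge0.
by rewrite exprMn !hnorm2.
Qed.

End InnerProduct.

Section Projections.
Variables (R : realType) (H : hilbert R) (M : set H) (P : H -> H).
Hypotheses (cM : closed_subspace M) (oP : orth_proj M P).
Local Notation ip := (hip H).
Local Notation N2 x := (complex.Re (hip H x x)).

Lemma proj_uniq f m : M m -> (forall g, M g -> ip (f - m) g = 0) -> P f = m.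
Proof.
move=> Mm hm; have [MP hP] := oP f.
have Md : M (P f - m).
  by case: cM => _ [cl _]; rewrite -scaleN1r addrC; apply: cl.
have e : P f - m = (f - m) - (f - P f) by rewrite opprB [RHS]addrC addrA subrK.
by apply/subr0_eq/hip_eq0; rewrite {1}e ipBl hm // hP // subrr.
Qed.

Lemma proj_id m : M m -> P m = m.
Proof. by move=> Mm; apply: proj_uniq => // g _; rewrite subrr ip0l. Qed.

Lemma proj_perp y : (forall m, M m -> ip y m = 0) -> P y = 0.
Proof. by move=> hy; apply: proj_uniq; [case: cM | move=> g /hy; rewrite subr0]. Qed.

Lemma proj_linear a f g : P (a *: f + g) = a *: P f + P g.
Proof.
apply: proj_uniq; first by case: cM => _ [cl _]; apply: cl; [case: (oP f)|case: (oP g)].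
move=> h Mh.
have -> : a *: f + g - (a *: P f + P g) = a *: (f - P f) + (g - P g).
  by rewrite scalerBr opprD !addrA; congr (_ + _); rewrite addrAC.
by rewrite ipDl ipZl (oP f).2 // (oP g).2 // mulr0 addr0.
Qed.

Lemma proj_add f g : P (f + g) = P f + P g.
Proof. by rewrite -(scale1r f) proj_linear !scale1r. Qed.

Lemma proj_sub f g : P (f - g) = P f - P g.
Proof. by rewrite (addrC f) -scaleN1r proj_linear scaleN1r addrC. Qed.

Lemma proj_orth f g : ip (P f) (g - P g) = 0.
Proof. by rewrite hip_conj (oP g).2 ?rmorph0 //; case: (oP f). Qed.

Lemma proj_selfadj f g : ip (P f) g = ip f (P g).
Proof.
have -> : ip (P f) g = ip (P f) (P g) + ip (P f) (g - P g) by rewrite -ipDr addrC subrK.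
have -> : ip f (P g) = ip (P f) (P g) + ip (f - P f) (P g) by rewrite -ipDl addrC subrK.
by rewrite proj_orth (oP f).2 ?addr0 //; case: (oP g).
Qed.

Lemma proj_N2 f : N2 (P f) <= N2 f.
Proof.
have -> : N2 f = N2 (P f + (f - P f)) by rewrite addrC subrK.
by rewrite N2D proj_orth /= mulr0 addr0 lerDl N2_ge0.
Qed.

Lemma proj_bounded : bounded_op P.
Proof.
split=> [a f g|]; first exact: proj_linear.
by exists 1 => f; rewrite mul1r; apply: sq_le_inv; rewrite ?hnorm_ge0 // !hnorm2 proj_N2.
Qed.

End Projections.

Definition linear_op (R : realType) (H1 H2 : hilbert R) (A : H1 -> H2) : Prop :=
  forall (a : R[i]) (x y : H1), A (a *: x + y) = a *: A x + A y.

Definition selfadj (R : realType) (H : hilbert R) (A : H -> H) : Prop :=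
  forall f g : H, hip H (A f) g = hip H f (A g).

Section LinearOps.
Variables (R : realType) (H1 H2 : hilbert R) (A : H1 -> H2).
Hypothesis linA : linear_op A.

Lemma lin0 : A 0 = 0.
Proof.
have := linA 1 0 0; rewrite !scale1r addr0 => h.
by apply: (addrI (A 0)); rewrite addr0 -h.
Qed.

Lemma linD x y : A (x + y) = A x + A y.
Proof. by have := linA 1 x y; rewrite !scale1r. Qed.

Lemma linZ a x : A (a *: x) = a *: A x.
Proof. by have := linA a x 0; rewrite !addr0 lin0 addr0. Qed.

Lemma linB x y : A (x - y) = A x - A y.
Proof. by rewrite linD -scaleN1r linZ scaleN1r. Qed.

Lemma inverse_linear (B : H2 -> H1) :
  (forall f, A (B f) = f) -> (forall f, B (A f) = f) -> linear_op B.
Proof. by move=> AB BA a x y; rewrite -{1}(AB x) -{1}(AB y) -linZ -linD BA. Qed.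

Lemma bounded_cvg (MA : R) u f : (forall x, hnorm (A x) <= MA * hnorm x) ->
  hcvg u f -> hcvg (A \o u) (A f).
Proof.
move=> hM hc e e0.
have e1 : 0 < e / (`|MA| + 1) by rewrite divr_gt0 // ltr_wpDl.
have [N hN] := hc _ e1; exists N => n nN.
have := hN n nN; rewrite -/(hnorm _) ltr_pdivlMr ?ltr_wpDl // => hl.
rewrite -/(hnorm _) /= -linB; apply: (le_lt_trans (hM _)).
have := hnorm_ge0 (u n - f); have := ler_norm MA; nra.
Qed.

End LinearOps.

Lemma bounded_op_comp (R : realType) (H1 H2 H3 : hilbert R)
  (A : H2 -> H3) (B : H1 -> H2) :
  bounded_op A -> bounded_op B -> bounded_op (A \o B).
Proof.
move=> [linA [MA hA]] [linB [MB hB]]; split=> [a x y|] /=; first by rewrite linB linA.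
exists (Num.max MA 0 * Num.max MB 0) => x /=.
have mA : 0 <= Num.max MA 0 by rewrite le_max lexx orbT.
apply: (le_trans (hA _)); apply: (le_trans (y := Num.max MA 0 * hnorm (B x))).
  by rewrite ler_wpM2r ?hnorm_ge0 // le_max lexx.
rewrite -mulrA ler_wpM2l //; apply: (le_trans (hB _)).
by rewrite ler_wpM2r ?hnorm_ge0 // le_max lexx.
Qed.

Lemma image_closed_subspace (R : realType) (H : hilbert R) (A B : H -> H)
  (M : set H) : linear_op A -> bounded_op B ->
  (forall f, A (B f) = f) -> (forall f, B (A f) = f) ->
  closed_subspace M -> closed_subspace (A @` M).
Proof.
move=> linA [_ [MB hB]] AB BA [M0 [Mlin Mlim]].
split; first by exists 0 => //; apply: lin0.
split=> [a _ _ [m1 M1 <-] [m2 M2 <-]|u f hu hc].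
  by exists (a *: m1 + m2); [apply: Mlin | rewrite linA].
exists (B f); last exact: AB.
apply: (Mlim (B \o u)) => [n|]; first by case: (hu n) => m Mm /= <-; rewrite BA.
by apply: (bounded_cvg _ hB) => //; apply: inverse_linear AB BA.
Qed.

Section SelfAdjoint.
Variables (R : realType) (H : hilbert R).
Local Notation ip := (hip H).
Local Notation N2 x := (complex.Re (hip H x x)).

(* A linear operator with a real quadratic form is self-adjoint (polarization). *)
Lemma selfadj_of_real_form (S : H -> H) : linear_op S ->
  (forall f, complex.Im (ip (S f) f) = 0) -> selfadj S.
Proof.
move=> linS hIm f g.
have e1 := hIm (f + g); have e2 := hIm (f + 'i%C *: g).
rewrite linD // !ipDl !ipDr in e1.
rewrite linD // linZ // !ipDl !ipDr !ipZl !ipZr in e2.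
rewrite (hip_conj f (S g)); move: e1 e2 (hIm f) (hIm g).
case: (ip (S f) g) => a1 a2; case: (ip (S g) f) => b1 b2.
case: (ip (S f) f) => c1 c2; case: (ip (S g) g) => d1 d2 /= e1 e2 e3 e4.
by apply/eqP; rewrite eq_complex /=; apply/andP; split; apply/eqP; lra.
Qed.

Lemma inverse_selfadj (S Sinv : H -> H) : selfadj S ->
  (forall f, S (Sinv f) = f) -> selfadj Sinv.
Proof. by move=> sa SK f g; rewrite -{1}(SK g) -sa SK. Qed.

Lemma coercive_N2 (S : H -> H) (A : R) : 0 < A ->
  (forall f, A * N2 f <= complex.Re (ip (S f) f)) ->
  forall f, A ^+ 2 * N2 f <= N2 (S f).
Proof.
move=> A0 hA f; have [->|nz] := eqVneq (N2 f) 0; first by rewrite mulr0 N2_ge0.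
have np : 0 < N2 f by rewrite lt0r nz N2_ge0.
have l2 : (A * N2 f) ^+ 2 <= complex.Re (ip (S f) f) ^+ 2.
  by apply: sq_le => //; rewrite mulr_ge0 // ltW.
rewrite -(ler_pM2r np) -mulrA -expr2 -exprMn.
exact: le_trans l2 (cauchy_schwarz_Re (S f) f).
Qed.

Lemma contraction_N2 (G : H -> H) (a c : R) : linear_op G -> selfadj G ->
  0 <= c -> (forall f, a * N2 f <= N2 (G f)) -> (forall f, c * N2 (G f) <= N2 f) ->
  forall e, N2 (e - Complex c 0 *: G (G e)) <= (1 - c * a) * N2 e.
Proof.
move=> linG saG c0 low up e.
rewrite N2B N2Z Re_ipZr -(saG e).
have h1 := up (G e); have h2 := low e.
have : c ^+ 2 * N2 (G (G e)) <= c * N2 (G e) by rewrite expr2 -mulrA ler_wpM2l.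
have : c * (a * N2 e) <= c * N2 (G e) by rewrite ler_wpM2l.
lra.
Qed.

End SelfAdjoint.

Section WeakMeasurability.
Variables (R : realType) (d : measure_display) (X : measurableType d).
Variables (H : hilbert R).
Local Notation ip := (hip H).
Local Notation N2 x := (complex.Re (hip H x x)).

(* y : X -> H is weakly measurable: every x |-> Re <y x, g> is measurable
   (the imaginary parts follow, see weakly_measurable_of_Re). *)
Definition weak_meas (y : X -> H) : Prop :=
  forall g : H, measurable_fun setT (fun x => complex.Re (ip (y x) g)).

Lemma weakly_measurable_of_Re (Q : X -> H -> H) :
  (forall f, weak_meas (fun x => Q x f)) -> weakly_measurable Q.
Proof.
move=> hQ f g; split; first exact: hQ.
by under eq_fun do rewrite Im_as_Re; apply: hQ.
Qed.

Lemma weak_meas_cst c : weak_meas (fun _ => c).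
Proof. by move=> g; apply: measurable_cst. Qed.

Lemma weak_meas_lin a (y z : X -> H) : weak_meas y -> weak_meas z ->
  weak_meas (fun x => a *: y x + z x).
Proof.
move=> hy hz g.
have -> : (fun x => complex.Re (ip (a *: y x + z x) g)) =
    (fun x => complex.Re (ip (y x) (Num.conj a *: g)) + complex.Re (ip (z x) g)).
  by apply: funext => x; rewrite ipDl ipZl ipZr conjCK raddfD.
by apply: measurable_realfun.measurable_funD; [apply: hy | apply: hz].
Qed.

Lemma weak_meas_selfadj (A : H -> H) (y : X -> H) : selfadj A ->
  weak_meas y -> weak_meas (fun x => A (y x)).
Proof. by move=> saA hy g; under eq_fun do rewrite saA; apply: hy. Qed.

(* In a separable space, |y x|^2 is the supremum of the measurable functions
   2 Re <y x, D n> - |D n|^2 over a dense sequence D, hence measurable. *)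
Lemma measurable_N2 (y : X -> H) : separable H -> weak_meas y ->
  measurable_fun setT (fun x => N2 (y x)).
Proof.
move=> [D dense] hy.
pose phi x n := 2 * complex.Re (ip (y x) (D n)) - N2 (D n).
have mphi n : measurable_fun setT (phi^~ n).
  apply: measurable_realfun.measurable_funB; last exact: measurable_cst.
  by apply: measurable_realfun.measurable_funM; [apply: measurable_cst | apply: hy].
apply: (measurable_realfun.measurable_fun_cvg (h := fun k x => runmax (phi x) k)).
  by elim=> [|k IH] //=; apply: measurable_realfun.measurable_maxr.
move=> x _; apply: runmax_cvg => [n|e e0].
  by have := N2_ge0 (y x - D n); rewrite N2B /phi; lra.
have [n hn] : exists n, hnorm (y x - D n) < Num.sqrt e by apply: dense; rewrite sqrtr_gt0.
exists n; move: hn; rewrite /hnorm /ipnorm ltr_sqrt ?sqrtr_gt0 // N2B /phi; lra.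
Qed.

(* Polarization: the inner product of two weakly measurable maps is measurable. *)
Lemma measurable_ip_Re (y z : X -> H) : separable H -> weak_meas y -> weak_meas z ->
  measurable_fun setT (fun x => complex.Re (ip (y x) (z x))).
Proof.
move=> sH hy hz.
have -> : (fun x => complex.Re (ip (y x) (z x))) =
    (fun x => 4^-1 * (N2 (1 *: y x + z x) - N2 ((-1) *: z x + y x))).
  by apply: funext => x; rewrite scale1r scaleN1r (addrC (- z x)) N2D N2B; field.
apply: measurable_realfun.measurable_funM; first exact: measurable_cst.
by apply: measurable_realfun.measurable_funB; apply: measurable_N2 => //;
  apply: weak_meas_lin.
Qed.

Lemma weak_meas_proj (F : X -> set H) (P : X -> H -> H) (w : X -> H) :
  separable H -> (forall x, orth_proj (F x) (P x)) -> weakly_measurable P ->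
  weak_meas w -> weak_meas (fun x => P x (w x)).
Proof.
move=> sH oP mP hw g.
under eq_fun do rewrite (proj_selfadj (oP _)).
by apply: measurable_ip_Re => // h; apply: (mP g h).1.
Qed.

End WeakMeasurability.

Lemma proj_iter_geometric (R : realType) (H : hilbert R) (M : set H)
  (P L : H -> H) (b m : H) (q : R) :
  closed_subspace M -> orth_proj M P -> linear_op L -> 0 <= q ->
  (forall e, complex.Re (hip H (L e) (L e)) <= q * complex.Re (hip H e e)) ->
  P (L m + b) = m ->
  forall k z0, complex.Re (hip H (iter k (fun z => P (L z + b)) z0 - m)
                                 (iter k (fun z => P (L z + b)) z0 - m))
    <= q ^+ k * complex.Re (hip H (z0 - m) (z0 - m)).
Proof.
move=> cM oP linL q0 contr fixm k z0; elim: k => [|k IH]; first by rewrite mul1r.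
rewrite iterS; set y := iter k _ z0.
have -> : P (L y + b) - m = P (L (y - m)).
  by rewrite -{1}fixm -(proj_sub cM oP) opprD addrACA subrr addr0 -linB.
apply: (le_trans (proj_N2 oP _)); apply: (le_trans (contr _)).
by rewrite exprS -mulrA ler_wpM2l.
Qed.

Section ProjectionOntoImage.
Variables (R : realType) (d : measure_display) (X : measurableType d).
Variables (H : hilbert R) (F : X -> set H) (P Q : X -> H -> H) (G : H -> H).
Variables (a c : R).
Hypotheses (hFP : forall x, closed_subspace (F x) /\ orth_proj (F x) (P x)).
Hypotheses (linG : linear_op G) (saG : selfadj G).
Hypotheses (oQ : forall x, orth_proj (G @` F x) (Q x)).
Local Notation ip := (hip H).
Local Notation N2 x := (complex.Re (hip H x x)).

Lemma image_proj_perp x f : P x (G (f - Q x f)) = 0.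
Proof.
have [cF oP] := hFP x.
apply: (proj_perp cF oP) => m Fm; rewrite saG.
by apply: (oQ x f).2; exists m.
Qed.

Lemma image_proj_key x f : P x (G (Q x f)) = P x (G f).
Proof.
have [cF oP] := hFP x.
have -> : G f = G (f - Q x f) + G (Q x f) by rewrite -linD // subrK.
by rewrite (proj_add cF oP) image_proj_perp add0r.
Qed.

Hypotheses (sH : separable H) (mP : weakly_measurable P).
Hypotheses (a0 : 0 < a) (c0 : 0 < c) (ca1 : c * a <= 1).
Hypotheses (low : forall f, a * N2 f <= N2 (G f)).
Hypotheses (up : forall f, c * N2 (G f) <= N2 f).

(* Q x f = G m where m in F x is the fixed point of the contraction
   z |-> P x (z - c G^2 z + c G f); the iterates are weakly measurable, so Q is. *)
Lemma image_proj_weakly_measurable : weakly_measurable Q.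
Proof.
apply: weakly_measurable_of_Re => f.
pose L z := z - Complex c 0 *: G (G z); pose b := Complex c 0 *: G f.
pose y k x := iter k (fun z => P x (L z + b)) 0.
have linL : linear_op L.
  move=> t u w; rewrite /L !linG scalerDr scalerBr !scalerA (mulrC t).
  by rewrite opprD !addrA; congr (_ + _); rewrite addrAC.
have saL : selfadj L.
  move=> u w; rewrite /L ipBl ipBr ipZl ipZr !saG; congr (_ - _ * _).
  by apply/eqP; rewrite eq_complex /= oppr0 !eqxx.
have wy k : weak_meas (y k).
  elim: k => [|k IH]; first exact: weak_meas_cst.
  apply: (weak_meas_proj sH (fun x => (hFP x).2) mP).
  have -> : (fun x => L (y k x) + b) = (fun x => 1 *: L (y k x) + b).
    by apply: funext => x; rewrite scale1r.
  by apply: weak_meas_lin; [apply: weak_meas_selfadj | apply: weak_meas_cst].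
move=> g; apply: (measurable_realfun.measurable_fun_cvg
  (h := fun k x => complex.Re (ip (G (y k x)) g))) => [k|x _].
  exact: weak_meas_selfadj.
have [cF oP] := hFP x.
have [m Fm Qm] := (oQ x f).1.
have fixm : P x (L m + b) = m.
  have -> : L m + b = m + Complex c 0 *: G (f - Q x f).
    by rewrite /L /b -Qm linB // scalerBr [RHS]addrA addrAC.
  rewrite (proj_add cF oP) (proj_id cF oP Fm) (linZ (proj_bounded cF oP).1).
  by rewrite image_proj_perp scaler0 addr0.
have q0 : 0 <= 1 - c * a by rewrite subr_ge0.
have geom := proj_iter_geometric cF oP linL q0
  (contraction_N2 linG saG (ltW c0) low up) fixm.
apply: (cvg_geometric_sq (C := N2 (0 - m) * N2 g / c) q0).
  by rewrite ltrBlDr ltrDl mulr_gt0.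
move=> k; rewrite -Qm -raddfB -ipBl -linB //.
apply: (le_trans (cauchy_schwarz_Re _ _)).
have := geom k 0.
have := up (y k x - m); have := N2_ge0 g; have := exprn_ge0 k q0.
set u := N2 (G _); set v := N2 (_ - m); set r := _ ^+ k => rk0 g0 hu hv.
rewrite mulrAC ler_pdivlMr //; nra.
Qed.

End ProjectionOntoImage.

Lemma lec_real_between (R : realType) (a b : R) (z : R[i]) :
  Complex a 0 <= z <= Complex b 0 ->
  complex.Im z = 0 /\ a <= complex.Re z <= b.
Proof.
case: z => x y; rewrite !lecE /= => /andP[/andP[/eqP <- ax] /andP[_ xb]].
by rewrite ax xb.
Qed.

Section PositiveInvertible.
Variables (R : realType) (H : hilbert R) (S Sinv : H -> H) (A B M : R).
Hypotheses (linS : linear_op S) (hM : forall f, hnorm (S f) <= M * hnorm f).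
Hypotheses (SK : forall f, S (Sinv f) = f) (KS : forall f, Sinv (S f) = f).
Hypotheses (A0 : 0 < A) (AB : A <= B).
Hypothesis hS : forall f,
  Complex (A * hnorm f ^+ 2) 0 <= hip H (S f) f <= Complex (B * hnorm f ^+ 2) 0.
Local Notation ip := (hip H).
Local Notation N2 x := (complex.Re (hip H x x)).

Lemma form_bounds f : complex.Im (ip (S f) f) = 0 /\
  A * N2 f <= complex.Re (ip (S f) f) <= B * N2 f.
Proof. by rewrite -hnorm2; apply: lec_real_between. Qed.

Lemma form_low f : A * N2 f <= complex.Re (ip (S f) f).
Proof. by case: (form_bounds f) => _ /andP[]. Qed.

Lemma pos_selfadj : selfadj S.
Proof. by apply: selfadj_of_real_form => // f; case: (form_bounds f). Qed.

Lemma inv_linear : linear_op Sinv.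
Proof. exact: inverse_linear SK KS. Qed.

Lemma inv_selfadj : selfadj Sinv.
Proof. exact: inverse_selfadj pos_selfadj SK. Qed.

Lemma inv_N2_up f : A ^+ 2 * N2 (Sinv f) <= N2 f.
Proof.
have := coercive_N2 A0 form_low (Sinv f).
by rewrite SK.
Qed.

Lemma inv_N2_low f : (M ^+ 2 + A ^+ 2)^-1 * N2 f <= N2 (Sinv f).
Proof.
have K0 : 0 < M ^+ 2 + A ^+ 2 by rewrite ltr_wpDl ?sqr_ge0 ?exprn_gt0.
have := sq_le (hnorm_ge0 _) (hM (Sinv f)); rewrite SK exprMn !hnorm2 => h.
rewrite mulrC ler_pdivrMr // mulrC (le_trans h) // ler_wpM2r ?N2_ge0 //.
by rewrite lerDl sqr_ge0.
Qed.

Lemma inv_bounded : bounded_op Sinv.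
Proof.
split; first exact: inv_linear.
exists A^-1 => f; apply: hnorm_le_of_N2; first by rewrite invr_ge0 ltW.
by rewrite exprVn mulrC ler_pdivlMr ?exprn_gt0 // mulrC inv_N2_up.
Qed.

Lemma inv_form_bounds f :
  Complex (A / (M ^+ 2 + A ^+ 2) * hnorm f ^+ 2) 0 <= ip (Sinv f) f <=
  Complex (B / A ^+ 2 * hnorm f ^+ 2) 0.
Proof.
have -> : ip (Sinv f) f = ip (S (Sinv f)) (Sinv f) by rewrite pos_selfadj SK.
have [Im0 /andP[lo hi]] := form_bounds (Sinv f).
rewrite hnorm2 !lecE Im0 /= eqxx /=.
have l := inv_N2_low f; have u := inv_N2_up f.
apply/andP; split.
  by rewrite -mulrA (le_trans _ lo) // ler_wpM2l // ltW.
apply: (le_trans hi); rewrite -mulrA ler_wpM2l ?(le_trans (ltW A0)) //.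
by rewrite ler_pdivlMl ?exprn_gt0.
Qed.

Lemma inv_bound_ratio : A ^+ 2 * (M ^+ 2 + A ^+ 2)^-1 <= 1.
Proof. by rewrite mulrC ler_pdivrMl ?ltr_wpDl ?sqr_ge0 ?exprn_gt0 // mulr1 lerDr sqr_ge0. Qed.

Lemma inv_bounds_ordered : A / (M ^+ 2 + A ^+ 2) <= B / A ^+ 2.
Proof.
have K0 : 0 < M ^+ 2 + A ^+ 2 by rewrite ltr_wpDl ?sqr_ge0 ?exprn_gt0.
rewrite ler_pdivrMr // mulrAC ler_pdivlMr ?exprn_gt0 //.
have BM : 0 <= B * M ^+ 2 by rewrite mulr_ge0 ?sqr_ge0 ?(le_trans (ltW A0)).
have := ler_wpM2r (exprn_ge0 2 (ltW A0)) AB; rewrite -exprS mulrDr; lra.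
Qed.

End PositiveInvertible.

Lemma frame_int_dual (R : realType) (d : measure_display) (X : measurableType d)
  (H : hilbert R) (K : X -> hilbert R) (v : X -> R) (P Q : X -> H -> H)
  (Lam : forall x, H -> K x) (T U Sinv : H -> H) (f g : H) :
  (forall x h, P x (Sinv (Q x h)) = P x (Sinv h)) ->
  (forall f, Sinv (T f) = T (Sinv f)) -> (forall f, Sinv (U f) = U (Sinv f)) ->
  frame_int v Q (fun x f => Lam x (P x (Sinv f))) T U f g =
  frame_int v P Lam T U (Sinv f) (Sinv g).
Proof. by move=> key cT cU; apply: funext => x; rewrite /frame_int !key cT cU. Qed.

Lemma dual_frame_op (R : realType) (d : measure_display) (X : measurableType d)
  (mu : {measure set X -> \bar R}) (H : hilbert R) (K : X -> hilbert R)
  (v : X -> R) (P Q : X -> H -> H) (Lam : forall x, H -> K x)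
  (T U S Sinv : H -> H) :
  is_frame_op mu v P Lam T U S -> (forall f, S (Sinv f) = f) ->
  selfadj Sinv -> bounded_op Sinv ->
  (forall x h, P x (Sinv (Q x h)) = P x (Sinv h)) ->
  (forall f, Sinv (T f) = T (Sinv f)) -> (forall f, Sinv (U f) = U (Sinv f)) ->
  is_frame_op mu v Q (fun x f => Lam x (P x (Sinv f))) T U Sinv.
Proof.
move=> [_ hS] SK saSinv bSinv key cT cU; split=> // f g.
rewrite (frame_int_dual v Lam f g key cT cU); have [int_fg <-] := hS (Sinv f) (Sinv g).
by rewrite SK saSinv.
Qed.

Theorem theorem4p1 (R : realType) (d : measure_display) (X : measurableType d)
  (mu : {measure set X -> \bar R}) (H : hilbert R) (K : X -> hilbert R)
  (v : X -> R) (F : X -> set H) (P : X -> H -> H) (Lam : forall x, H -> K x)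
  (T U S Sinv : H -> H) (Q : X -> H -> H) :
  separable H ->
  cgf_frame mu v F P Lam T U ->
  is_frame_op mu v P Lam T U S ->
  (forall f, S (Sinv f) = f) -> (forall f, Sinv (S f) = f) ->
  (forall f, Sinv (T f) = T (Sinv f)) ->
  (forall f, Sinv (U f) = U (Sinv f)) ->
  (forall x, orth_proj (Sinv @` F x) (Q x)) ->
  cgf_frame mu v (fun x => Sinv @` F x) Q (fun x f => Lam x (P x (Sinv f))) T U /\
  is_frame_op mu v Q (fun x f => Lam x (P x (Sinv f))) T U Sinv.
Proof.
move=> sH [hFP [wmP [bL [mv [vpos [GT [GU [_ [A [B [A0 [AB hAB]]]]]]]]]]]].
move=> hSop SK KS cT cU oQ; have [[linS [M hM]] hSint] := hSop.
have hS f : Complex (A * hnorm f ^+ 2) 0 <= hip H (S f) f <=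
    Complex (B * hnorm f ^+ 2) 0 by rewrite (hSint f f).2; apply/andP; apply: hAB.
have linSinv := inv_linear linS SK KS.
have saSinv := inv_selfadj linS SK hS.
have bSinv := inv_bounded linS SK KS A0 hS.
have key := image_proj_key hFP linSinv saSinv oQ.
have FO := dual_frame_op hSop SK saSinv bSinv key cT cU.
have K0 : 0 < M ^+ 2 + A ^+ 2 by rewrite ltr_wpDl ?sqr_ge0 ?exprn_gt0.
split=> //; split.
  move=> x; split; last exact: oQ.
  exact: image_closed_subspace linSinv (proj1 hSop) KS SK (hFP x).1.
split.
  apply: (image_proj_weakly_measurable hFP linSinv saSinv oQ sH wmP _ _
    (inv_bound_ratio M A0) (inv_N2_low hM SK A0) (inv_N2_up SK A0 hS)).
    by rewrite invr_gt0.
  by rewrite exprn_gt0.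
split.
  move=> x; have [cF oP] := hFP x.
  exact: bounded_op_comp (bL x) (bounded_op_comp (proj_bounded cF oP) bSinv).
do 4 (split=> //); split; first by move=> f; apply: (FO.2 f f).1.
exists (A / (M ^+ 2 + A ^+ 2)), (B / A ^+ 2); split; first by rewrite divr_gt0.
split; first exact: inv_bounds_ordered.
by move=> f; rewrite -(FO.2 f f).2; apply/andP; apply: inv_form_bounds.
Qed.
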